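(* Let $r\geq 2$ and let $\mathcal{H}=(V,E)$ be an $r$-regular $r$-uniform hypergraph with no repeated hyperedge, $V=\{v_1,\dots,v_n\}$. Let $\mathcal{A}_{\mathcal{H}}$ be its layered e-adjacency tensor, $\Delta=\max_{1\le i\le n}\deg(v_i)$ and $\Delta^\star=\max_{1\le i\le k_{\max}-1}\deg(y_i)$ (defined in the context). Then $\mathcal{A}_{\mathcal{H}}$ has an eigenvalue $\lambda$ with $|\lambda|=\max(\Delta,\Delta^\star)$.
   Context: A hypergraph $\mathcal{H}=(V,E)$ on $V=\{v_1,\dots,v_n\}$ is a family $E$ of nonempty subsets (hyperedges) of $V$; it has no repeated hyperedge if its hyperedges are pairwise distinct; it is $r$-uniform if every hyperedge has cardinality $r$, and $r$-regular if every vertex has degree $r$ (degree $\deg(v_i)$ = number of hyperedges containing $v_i$). The range is $k_{\max}=\max\{|e|:e\in E\}$. Introduce new pairwise distinct vertices $y_1,\dots,y_{k_{\max}-1}\notin V$. The layered uniform hypergraph of $\mathcal{H}$ is the $k_{\max}$-uniform hypergraph on $V\cup\{y_1,\dots,y_{k_{\max}-1}\}$ with hyperedges $e\cup\{y_{|e|},\dots,y_{k_{\max}-1}\}$ for $e\in E$; $\deg(y_i)$ is the number of these hyperedges containing $y_i$. The layered e-adjacency tensor $\mathcal{A}_{\mathcal{H}}=(a_{i_1\dots i_{k_{\max}}})$ is the symmetric hypermatrix of order $k_{\max}$ and dimension $N=n+k_{\max}-1$ (index $i\le n$ for $v_i$, index $n+l$ for $y_l$) such that: for each $e=\{v_{i_1},\dots,v_{i_j}\}\in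 E$ with $i_1<\dots<i_j$, putting $i_l=n+l-1$ for $l\in\{j+1,\dots,k_{\max}\}$, every entry whose index tuple is a permutation of $(i_1,\dots,i_{k_{\max}})$ equals $\frac{1}{(k_{\max}-1)!}$; all other entries are $0$. Eigenvalues (in the sense of Qi): for a hypermatrix $\mathcal{A}=(a_{i_1\dots i_m})$ of order $m$ and dimension $N$, $\lambda\in\mathbb{C}$ is an eigenvalue if there exists a nonzero $x\in\mathbb{C}^N$ with $\sum_{i_2,\dots,i_m=1}^{N} a_{i i_2\dots i_m}x_{i_2}\cdots x_{i_m}=\lambda x_i^{m-1}$ for all $i$. *)

From HB Require Import structures.
From mathcomp Require Import all_boot all_order all_algebra.
Set Implicit Arguments. Unset Strict Implicit. Unset Printing Implicit Defensive.
Import Order.TTheory GRing.Theory Num.Theory.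
Local Open Scope ring_scope.

(* A hypergraph on V = {v_1..v_n} is represented by n and a sequence E of
   hyperedges (subsets of 'I_n); vertex v_i is the ordinal i-1. *)

Definition hdeg (n : nat) (E : seq {set 'I_n}) (v : 'I_n) : nat :=
  count (fun e : {set 'I_n} => v \in e) E.

Definition kmax (n : nat) (E : seq {set 'I_n}) : nat :=
  (\max_(e <- E) #|e|)%N.

Definition ldim (n : nat) (E : seq {set 'I_n}) : nat := n + (kmax E).-1.

(* Layered hyperedge of e, as a subset of 'I_N (0-based indices):
   index i < n is vertex v_(i+1); index n + l - 1 (1 <= l <= kmax-1) is y_l.
   e is extended by y_|e|, ..., y_(kmax-1), i.e. indices i >= n with
   |e| <= i - n + 1. *)
Definition layered_edge (n : nat) (E : seq {set 'I_n}) (e : {set 'I_n})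
  : {set 'I_(ldim E)} :=
  [set i : 'I_(ldim E) |
     if (i < n)%N then [exists v : 'I_n, (val v == val i) && (v \in e)]
     else (#|e| <= i - n + 1)%N].
Arguments layered_edge {n} E e.

Definition ldeg (n : nat) (E : seq {set 'I_n}) (i : 'I_(ldim E)) : nat :=
  count (fun e : {set 'I_n} => i \in layered_edge E e) E.
Arguments ldeg {n} E i.

Definition Delta (n : nat) (E : seq {set 'I_n}) : nat :=
  (\max_(v : 'I_n) hdeg E v)%N.

(* Delta* = max_{1<=l<=kmax-1} deg(y_l)  (0 if there are no y's) *)
Definition Delta_star (n : nat) (E : seq {set 'I_n}) : nat :=
  (\max_(i : 'I_(ldim E) | (n <= i)%N) ldeg E i)%N.

(* Entry of the layered e-adjacency tensor at index sequence s
   (s = (i_1,...,i_kmax)): 1/(kmax-1)! if s is a permutation of the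
   (duplicate-free) index tuple of the layered hyperedge of some e in E,
   0 otherwise. *)
Definition ltensor (C : numClosedFieldType) (n : nat) (E : seq {set 'I_n})
  (s : seq 'I_(ldim E)) : C :=
  if [&& size s == kmax E, uniq s &
        has (fun e : {set 'I_n} => [set x in s] == layered_edge E e) E]
  then (((kmax E).-1)`!%:R)^-1 else 0.
Arguments ltensor C {n} E s.

Definition is_ltensor_eigenvalue (C : numClosedFieldType) (n : nat)
  (E : seq {set 'I_n}) (lambda : C) : Prop :=
  exists x : 'I_(ldim E) -> C, (exists i, x i != 0) /\
    forall i : 'I_(ldim E),
      \sum_(t : ((kmax E).-1).-tuple 'I_(ldim E))
          ltensor C E (i :: t) * \prod_(j <- t) x j
      = lambda * x i ^+ (kmax E).-1.

(* In an r-uniform hypergraph every hyperedge already has k_max = r vertices,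
   so layering adds no auxiliary vertex to any edge: every y_l has degree 0 and
   Delta* = 0.  For such a hypergraph the contraction of the layered tensor is
   (A x^(k-1))_i = sum_(e containing i) prod_(j in e, j <> i) x_j, since each
   edge contributes its (k-1)! orderings, each with weight 1/(k-1)!.  For x the
   indicator of V this is deg(i) = r on V and 0 on the y's, so r = Delta =
   max(Delta, Delta* ) is an eigenvalue. *)
From mathcomp Require Import all_boot all_order all_algebra fingroup perm zify.
Set Implicit Arguments.
Unset Strict Implicit.
Unset Printing Implicit Defensive.

Import Order.TTheory GRing.Theory Num.Theory.
Local Open Scope ring_scope.

Lemma perm_enumE (T : finType) (s : seq T) (A : {set T}) :
  perm_eq s (enum A) = uniq s && ([set x in s] == A).
Proof.
apply/idP/andP => [s_A | [s_uniq /eqP <-]].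
  split; first by rewrite (perm_uniq s_A) enum_uniq.
  by apply/eqP/setP => x; rewrite inE (perm_mem s_A) mem_enum.
by apply: uniq_perm; rewrite ?enum_uniq // => x; rewrite mem_enum inE.
Qed.

Lemma perm_cons_rem (T : eqType) (i : T) (s t : seq T) :
  i \in s -> perm_eq (i :: t) s = perm_eq t (rem i s).
Proof. by move=> s_i; rewrite (permPr (perm_to_rem s_i)) perm_cons. Qed.

Lemma card_perm_eq_tuples (T : finType) (k : nat) (t0 : k.-tuple T) :
  uniq t0 -> #|[pred t : k.-tuple T | perm_eq t t0]| = k`!.
Proof.
move=> t0_uniq.
pose permute (p : 'S_k) := [tuple tnth t0 (p i) | i < k].
have permute_inj : injective permute.
  move=> p q /(congr1 (fun t : k.-tuple T => tnth t)) eq_pq.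
  apply/permP => i; have := congr1 (fun g => g i) eq_pq.
  by rewrite !tnth_mktuple => /(tuple_uniqP _ t0_uniq).
rewrite -card_Sn -(card_imset _ permute_inj); apply: eq_card => t.
rewrite inE /=; apply/tuple_permP/imsetP => [[p t_p] | [p _ ->]]; last by exists p.
by exists p => //; apply: val_inj.
Qed.

Lemma sum_prod_perm_cons_tuples (R : comPzSemiRingType) (T : finType) (k : nat)
    (i : T) (s : seq T) (F : T -> R) :
  uniq s -> i \in s -> size s = k.+1 ->
  \sum_(t : k.-tuple T | perm_eq (i :: t) s) \prod_(j <- t) F j
    = (\prod_(j <- rem i s) F j) *+ k`!.
Proof.
move=> s_uniq s_i s_size.
have rem_size : size (rem i s) == k by rewrite size_rem // s_size.
pose t0 := Tuple rem_size.
have t0_uniq : uniq t0 by rewrite rem_uniq.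
rewrite -(card_perm_eq_tuples t0_uniq) -sumr_const.
apply: eq_big => [t | t]; rewrite ?inE perm_cons_rem //.
by move=> t_t0; rewrite (perm_big _ t_t0).
Qed.

Section LayeredEdges.
Variables (n : nat) (E : seq {set 'I_n}).

Definition vertex_index (v : 'I_n) : 'I_(ldim E) := widen_ord (leq_addr _ _) v.

Lemma vertex_index_inj : injective vertex_index.
Proof. by move=> u v /(congr1 val) /= /val_inj. Qed.

Lemma vertex_indexK (j : 'I_(ldim E)) (j_lt_n : (j < n)%N) :
  vertex_index (Ordinal j_lt_n) = j.
Proof. exact: val_inj. Qed.

Lemma mem_layered_edge_vertex (v : 'I_n) (e : {set 'I_n}) :
  (vertex_index v \in layered_edge E e) = (v \in e).
Proof.
rewrite inE /= ltn_ord; apply/existsP/idP => [[u /andP[/eqP/val_inj -> //]] | e_v].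
by exists v; rewrite eqxx.
Qed.

Lemma layered_edge_inj : injective (layered_edge E).
Proof. by move=> e1 e2 eq_e; apply/setP => v; rewrite -!mem_layered_edge_vertex eq_e. Qed.

Lemma ldeg_vertex (v : 'I_n) : ldeg E (vertex_index v) = hdeg E v.
Proof. by apply: eq_count => e; rewrite mem_layered_edge_vertex. Qed.

Lemma layered_edge_full (e : {set 'I_n}) :
  (kmax E <= #|e|)%N -> layered_edge E e = vertex_index @: e.
Proof.
move=> e_full; apply/setP => j; case: (ltnP j n) => [j_lt_n | n_le_j].
  by rewrite -(vertex_indexK j_lt_n) mem_layered_edge_vertex mem_imset //; exact: vertex_index_inj.
apply/idP/imsetP => [| [v _ j_v]]; last by move: n_le_j; rewrite j_v /= leqNgt ltn_ord.
rewrite inE ltnNge n_le_j /= => e_small; exfalso.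
have : (j < n + (kmax E).-1)%N by exact: ltn_ord.
by move: (nat_of_ord j) n_le_j e_small e_full => {}j; case: (kmax E) => [|k] /=; lia.
Qed.

Lemma Delta_regular d : (0 < n)%N -> (forall v, hdeg E v = d) -> Delta E = d.
Proof.
move=> n_gt0 regular; apply/eqP; rewrite eqn_leq; apply/andP; split.
  by apply/bigmax_leqP => v _; rewrite regular.
by rewrite -(regular (Ordinal n_gt0)) (leq_bigmax (Ordinal n_gt0)).
Qed.

End LayeredEdges.

Lemma uniform_card_kmax (n r : nat) (E : seq {set 'I_n}) :
  all (fun e : {set 'I_n} => #|e| == r) E ->
  {in E, forall e : {set 'I_n}, #|e| = kmax E}.
Proof.
move=> /allP uniform e E_e; apply/eqP; rewrite eqn_leq; apply/andP; split.
  exact: (leq_bigmax_seq (F := fun e : {set 'I_n} => #|e|)).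
rewrite (eqP (uniform e E_e)); apply/bigmax_leqP_seq => e' E_e' _.
by rewrite (eqP (uniform e' E_e')).
Qed.

Section LayeredUniform.
Variables (C : numClosedFieldType) (n : nat) (E : seq {set 'I_n}).
Hypothesis E_uniq : uniq E.
Hypothesis E_uniform : {in E, forall e : {set 'I_n}, #|e| = kmax E}.
Local Notation L := (layered_edge E).

Lemma layered_edge_uniform : {in E, forall e, L e = vertex_index E @: e}.
Proof. by move=> e E_e; rewrite layered_edge_full // E_uniform. Qed.

Lemma card_layered_edge e : e \in E -> #|L e| = kmax E.
Proof.
move=> E_e; rewrite layered_edge_uniform // card_imset; first exact: E_uniform.
exact: vertex_index_inj.
Qed.

Lemma layered_edge_lt e j : e \in E -> j \in L e -> (j < n)%N.
Proof. by move=> E_e; rewrite layered_edge_uniform // => /imsetP[v _ ->] /=. Qed.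

Lemma ldeg_ge (j : 'I_(ldim E)) : (n <= j)%N -> ldeg E j = 0%N.
Proof.
move=> n_le_j; apply/eqP; rewrite -leqn0 leqNgt -has_count; apply/hasPn => e E_e.
by apply: contraTN n_le_j => /(layered_edge_lt E_e); rewrite -ltnNge.
Qed.

Lemma Delta_star_uniform : Delta_star E = 0%N.
Proof. by apply: big1 => j; exact: ldeg_ge. Qed.

Lemma ltensorE s :
  ltensor C E s = \sum_(e <- E | perm_eq s (enum (L e))) ((kmax E).-1`!%:R)^-1.
Proof.
have edge_cond : [&& size s == kmax E, uniq s & has (fun e => [set x in s] == L e) E]
    = has (fun e => perm_eq s (enum (L e))) E.
  apply/and3P/hasP => [[_ s_uniq /hasP[e E_e s_e]] | [e E_e s_e]].
    by exists e; rewrite // perm_enumE s_uniq.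
  move: (s_e); rewrite perm_enumE => /andP[s_uniq s_eq]; split=> //.
    by rewrite (perm_size s_e) -cardE card_layered_edge.
  by apply/hasP; exists e.
have count_eq_has : count (fun e => perm_eq s (enum (L e))) E
    = has (fun e => perm_eq s (enum (L e))) E.
  case s_uniq: (uniq s); last first.
    have no_edge : (fun e => perm_eq s (enum (L e))) =1 pred0.
      by move=> e; rewrite perm_enumE s_uniq.
    by rewrite (eq_count no_edge) (eq_has no_edge) count_pred0 has_pred0.
  have edge_eq : (fun e => perm_eq s (enum (L e))) =1 preim L (pred1 [set x in s]).
    by move=> e; rewrite perm_enumE s_uniq eq_sym.
  have LE_uniq : uniq (map L E) by rewrite map_inj_uniq //; exact: layered_edge_inj.
  by rewrite (eq_count edge_eq) (eq_has edge_eq) -count_map -has_map has_pred1 count_uniq_mem.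
under eq_bigr do rewrite -[_^-1]mulr1n.
by rewrite sumrMnr sum1_count count_eq_has /ltensor edge_cond; case: has.
Qed.

Lemma ltensor_contractE (x : 'I_(ldim E) -> C) (i : 'I_(ldim E)) :
  \sum_(t : (kmax E).-1.-tuple 'I_(ldim E)) ltensor C E (i :: t) * \prod_(j <- t) x j
    = \sum_(e <- E | i \in L e) \prod_(j in L e :\ i) x j.
Proof.
under eq_bigr do rewrite ltensorE big_mkcond mulr_suml.
rewrite exchange_big [RHS]big_mkcond !big_seq; apply: eq_bigr => e E_e /=.
have [L_i | L_Ni] := boolP (i \in L e); last first.
  apply: big1 => t _; rewrite ifF ?mul0r //.
  by apply: contraNF L_Ni => /perm_mem; rewrite -mem_enum => <-; rewrite mem_head.
have enum_size : size (enum (L e)) = (kmax E).-1.+1.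
  rewrite -cardE card_layered_edge // prednK // -(card_layered_edge E_e).
  by apply/card_gt0P; exists i.
transitivity (\sum_(t : (kmax E).-1.-tuple 'I_(ldim E) | perm_eq (i :: t) (enum (L e)))
                ((kmax E).-1`!%:R)^-1 * \prod_(j <- t) x j).
  by rewrite [RHS]big_mkcond; apply: eq_bigr => t _; case: ifP; rewrite ?mul0r.
rewrite -mulr_sumr sum_prod_perm_cons_tuples ?enum_uniq ?mem_enum //.
rewrite mulrnAr -mulr_natr mulrAC mulVf ?mul1r; last by rewrite pnatr_eq0 -lt0n fact_gt0.
rewrite rem_filter ?enum_uniq // big_filter big_enum_cond.
by apply: eq_bigl => j; rewrite in_setD1 andbC.
Qed.

Lemma ltensor_contract_indicator (i : 'I_(ldim E)) :
  \sum_(t : (kmax E).-1.-tuple 'I_(ldim E))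
      ltensor C E (i :: t) * \prod_(j <- t) (j < n)%:R
    = (ldeg E i)%:R.
Proof.
rewrite ltensor_contractE /ldeg -sum1_count natr_sum big_seq_cond [RHS]big_seq_cond.
apply: eq_bigr => e /andP[E_e L_i]; apply: big1 => j /setD1P[_ L_j].
by rewrite (layered_edge_lt E_e L_j).
Qed.

Lemma regular_uniform_eigenvalue d :
  (0 < n)%N -> (forall v, hdeg E v = d) -> is_ltensor_eigenvalue E (d%:R : C).
Proof.
move=> n_gt0 regular; exists (fun j => (j < n)%:R); split.
  by exists (vertex_index E (Ordinal n_gt0)); rewrite /= n_gt0 oner_neq0.
move=> i; rewrite ltensor_contract_indicator; case: (ltnP i n) => [i_lt_n | n_le_i].
  by rewrite expr1n mulr1 -(vertex_indexK i_lt_n) ldeg_vertex regular.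
have k_gt0 : (0 < (kmax E).-1)%N.
  have : (i < n + (kmax E).-1)%N by exact: ltn_ord.
  by move: (nat_of_ord i) n_le_i => m; case: (kmax E) => [|k] /=; lia.
by rewrite ldeg_ge // expr0n eqn0Ngt k_gt0 mulr0.
Qed.

End LayeredUniform.

Theorem mainTheorem3 (C : numClosedFieldType) (r n : nat)
  (E : seq {set 'I_n})
  (Hr : (2 <= r)%N)
  (Hn : (0 < n)%N)
  (Hne : all (fun e : {set 'I_n} => e != set0) E)
  (Huniq : uniq E)
  (Hunif : all (fun e : {set 'I_n} => #|e| == r) E)
  (Hreg : forall v : 'I_n, hdeg E v = r) :
  exists lambda : C, is_ltensor_eigenvalue E lambda /\
    `|lambda| = (maxn (Delta E) (Delta_star E))%:R.
Proof.
have E_uniform := uniform_card_kmax Hunif.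
exists r%:R; split; first exact: regular_uniform_eigenvalue.
by rewrite (Delta_regular Hn Hreg) Delta_star_uniform // maxn0 normr_nat.
Qed.
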